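(* Let $\eta>2$, $\lambda_b,\lambda_u>0$, $\bar\sigma_2^2>0$, $m>0$, $\theta>0$, $m_0=\lceil m\rceil$, $a_m=m\,\Gamma(1+m)^{-1/m}$, and for $k=1,\dots,m_0$ let $$H_k=\frac{4^{1/\eta}}{\sqrt\pi}\Gamma\!\left(1-\tfrac{2}{\eta}\right)\Gamma\!\left(\tfrac12+\tfrac{2}{\eta}\right)\left(\bar\sigma_2^2\frac{k a_m}{m\theta}\right)^{2/\eta},\qquad G_k(\tau)=\lambda_b+\lambda_u H_k\tau^{2/\eta}\ (\tau\ge0).$$ Define $$F_\gamma(\tau)=1-\lambda_b\sum_{k=1}^{m_0}(-1)^{k+1}\binom{m_0}{k}\frac{1}{G_k(\tau)}.$$ Then $$\lim_{\tau\to\infty}\Big[\log(1+\tau)F_\gamma(\tau)-\log(1+\tau)\Big]=0.$$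
   Context: $\Gamma$ is the Gamma function and $\lceil\cdot\rceil$ the ceiling. In the paper $F_\gamma$ is the (approximate) CDF of the SIR of uplink CUMA, with $\theta=\theta_S(1)$ the Gamma scale parameter of the desired signal power at unit distance; for the claim all listed quantities are arbitrary positive constants. *)

From Stdlib Require Import Reals Lra.
From Coquelicot Require Import Coquelicot.
Open Scope R_scope.

Definition Gamma (x : R) : R :=
  RInt_gen (fun t => Rpower t (x - 1) * exp (- t))
           (at_right 0) (Rbar_locally p_infty).

Definition ceil (x : R) : Z := (- Int_part (- x))%Z.

(* nonnegative-base real power, with 0^y = 0 (y > 0 in all uses) *)
Definition rpow (x y : R) : R := if Rle_dec x 0 then 0 else Rpower x y.

Definition a_m (m : R) : R := m * Rpower (Gamma (1 + m)) (- (1 / m)).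

Definition H_k (eta sigma2 m theta : R) (k : nat) : R :=
  Rpower 4 (1 / eta) / sqrt PI * Gamma (1 - 2 / eta) * Gamma (1/2 + 2 / eta)
  * Rpower (sigma2 * (INR k * a_m m / (m * theta))) (2 / eta).

Definition G_k (lb lu eta sigma2 m theta : R) (k : nat) (tau : R) : R :=
  lb + lu * H_k eta sigma2 m theta k * rpow tau (2 / eta).

Definition F_gamma (lb lu eta sigma2 m theta : R) (tau : R) : R :=
  let m0 := Z.to_nat (ceil m) in
  1 - lb * sum_n_m (fun k => (-1) ^ (k + 1) * Binomial.C m0 k
                              * / G_k lb lu eta sigma2 m theta k tau) 1 m0.

From Stdlib Require Import Reals Lra Lia Classical.
From Coquelicot Require Import Coquelicot.
Open Scope R_scope.

(* Expanding F_gamma, ln(1+tau) F_gamma(tau) - ln(1+tau) equals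
   -lb * sum_k c_k ln(1+tau) / G_k(tau), a finite sum with constant coefficients.
   Each H_k is positive because the two Gamma values are taken at arguments in (0, 2],
   where the Gamma integral converges to a positive number (its partial integrals are
   bounded by 1/x + 2). With p = 2/eta, ln t <= (2/p) t^(p/2) gives
   ln(1+tau) / G_k(tau) = O(tau^(-p/2)), so every term tends to 0. *)

Lemma RInt_le_RInt_superinterval (f : R -> R) (a' a b b' : R) :
  a' <= a -> a <= b -> b <= b' -> ex_RInt f a' b' ->
  (forall t, a' < t < b' -> 0 <= f t) ->
  RInt f a b <= RInt f a' b'.
Proof.
  intros Ha'a Hab Hbb' Hf Hpos.
  assert (Hf_a'b : ex_RInt f a' b)
    by (apply (@ex_RInt_Chasles_1 R_CompleteNormedModule _ _ _ b'); auto; lra).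
  assert (Hf_bb' : ex_RInt f b b')
    by (apply (@ex_RInt_Chasles_2 R_CompleteNormedModule _ a'); auto; lra).
  assert (Hf_a'a : ex_RInt f a' a)
    by (apply (@ex_RInt_Chasles_1 R_CompleteNormedModule _ _ _ b); auto; lra).
  assert (Hf_ab : ex_RInt f a b)
    by (apply (@ex_RInt_Chasles_2 R_CompleteNormedModule _ a'); auto; lra).
  rewrite <- (RInt_Chasles f a' b b'), <- (RInt_Chasles f a' a b) by assumption.
  assert (0 <= RInt f a' a) by (apply RInt_ge_0; auto; intros; apply Hpos; lra).
  assert (0 <= RInt f b b') by (apply RInt_ge_0; auto; intros; apply Hpos; lra).
  unfold plus; simpl; lra.
Qed.

Lemma is_RInt_gen_nonneg_bounded (f : R -> R) (M : R) :
  (forall t, 0 < t -> 0 <= f t) ->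
  (forall a b, 0 < a -> a <= b -> ex_RInt f a b) ->
  (forall a b, 0 < a -> a <= b -> RInt f a b <= M) ->
  exists l, (forall a b, 0 < a -> a <= b -> RInt f a b <= l) /\
            is_RInt_gen f (at_right 0) (Rbar_locally p_infty) l.
Proof.
  intros Hpos Hex HM.
  set (E := fun y => exists a b, 0 < a /\ a <= b /\ y = RInt f a b).
  assert (HE_bound : bound E) by (exists M; intros y (a & b & Ha & Hab & ->); auto).
  assert (HE_inhabited : exists y, E y) by (exists (RInt f 1 1), 1, 1; repeat split; lra).
  destruct (completeness E HE_bound HE_inhabited) as [l [Hub Hlub]].
  assert (Hle_l : forall a b, 0 < a -> a <= b -> RInt f a b <= l)
    by (intros a b Ha Hab; apply Hub; now exists a, b).
  exists l; split; [exact Hle_l |].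
  intros P [eps Heps].
  assert (Happrox : exists a1 b1, 0 < a1 /\ a1 <= b1 /\ l - eps < RInt f a1 b1).
  { apply NNPP; intros Hno.
    assert (l <= l - eps); [| destruct eps; simpl in *; lra].
    apply Hlub; intros y (a & b & Ha & Hab & ->).
    apply Rnot_lt_le; intros Hlt; apply Hno; now exists a, b. }
  destruct Happrox as (a1 & b1 & Ha1 & Hab1 & Hclose).
  apply Filter_prod with (Q := fun a => 0 < a <= a1) (R := fun b => b1 < b).
  - exists (mkposreal a1 Ha1); intros a Ha Ha0; simpl in *.
    apply Rabs_def2 in Ha; unfold minus, plus, opp in Ha; simpl in Ha; lra.
  - now exists b1.
  - intros a b [Ha Haa1] Hbb1; simpl.
    exists (RInt f a b); split.
    + apply (@RInt_correct R_CompleteNormedModule), Hex; lra.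
    + apply Heps.
      assert (RInt f a1 b1 <= RInt f a b)
        by (apply RInt_le_RInt_superinterval; try lra; [apply Hex | intros; apply Hpos]; lra).
      assert (RInt f a b <= l) by (apply Hle_l; lra).
      apply Rabs_def1; unfold minus, plus, opp; simpl; lra.
Qed.

Definition gamma_integrand (x t : R) : R := Rpower t (x - 1) * exp (- t).

Lemma gamma_integrand_pos x t : 0 < gamma_integrand x t.
Proof. apply Rmult_lt_0_compat; apply exp_pos. Qed.

Lemma continuous_Rpower y t : 0 < t -> continuous (fun s => Rpower s y) t.
Proof.
  intros Ht; apply (@ex_derive_continuous R_AbsRing R_NormedModule).
  exists (y * Rpower t (y - 1)); now apply is_derive_Reals, derivable_pt_lim_power.
Qed.

Lemma continuous_gamma_integrand x t : 0 < t -> continuous (gamma_integrand x) t.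
Proof.
  intros Ht; apply (continuous_mult (fun s => Rpower s (x - 1)) (fun s => exp (- s))).
  - now apply continuous_Rpower.
  - apply (@ex_derive_continuous R_AbsRing R_NormedModule); auto_derive; auto.
Qed.

Lemma ex_RInt_gamma_integrand x a b :
  0 < a -> a <= b -> ex_RInt (gamma_integrand x) a b.
Proof.
  intros Ha Hab; apply (@ex_RInt_continuous R_CompleteNormedModule); intros t Ht.
  rewrite Rmin_left in Ht by lra; apply continuous_gamma_integrand; lra.
Qed.

Lemma RInt_gamma_integrand_le_0_1 x a :
  0 < x -> 0 < a <= 1 -> RInt (gamma_integrand x) a 1 <= / x.
Proof.
  intros Hx Ha.
  assert (Hprim : is_RInt (fun s => Rpower s (x - 1)) a 1
                    (minus (/ x * Rpower 1 x) (/ x * Rpower a x))).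
  { apply (is_RInt_derive (V := R_CompleteNormedModule) (fun s => / x * Rpower s x));
      intros s Hs; rewrite Rmin_left, Rmax_right in Hs by lra.
    - replace (Rpower s (x - 1)) with (/ x * (x * Rpower s (x - 1))) by (field; lra).
      apply is_derive_scal, is_derive_Reals, derivable_pt_lim_power; lra.
    - apply continuous_Rpower; lra. }
  assert (Hle := is_RInt_le _ _ a 1 _ _ (proj2 Ha)
                   (RInt_correct _ _ _ (ex_RInt_gamma_integrand x a 1 (proj1 Ha) (proj2 Ha)))
                   Hprim).
  replace (Rpower 1 x) with 1 in Hle by (unfold Rpower; now rewrite ln_1, Rmult_0_r, exp_0).
  unfold minus, plus, opp in Hle; simpl in Hle.
  assert (0 < / x * Rpower a x)
    by (apply Rmult_lt_0_compat; [apply Rinv_0_lt_compat; lra | apply exp_pos]).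
  enough (RInt (gamma_integrand x) a 1 <= / x * 1 + - (/ x * Rpower a x)) by lra.
  apply Hle; intros s Hs; unfold gamma_integrand.
  assert (0 < Rpower s (x - 1)) by apply exp_pos.
  assert (exp (- s) < 1) by (rewrite <- exp_0; apply exp_increasing; lra).
  nra.
Qed.

Lemma RInt_gamma_integrand_le_1_oo x b :
  x <= 2 -> 1 <= b -> RInt (gamma_integrand x) 1 b <= 2.
Proof.
  intros Hx Hb.
  assert (Hprim : is_RInt (fun s => s * exp (- s)) 1 b
                    (minus (- (b + 1) * exp (- b)) (- (1 + 1) * exp (- 1)))).
  { apply (is_RInt_derive (V := R_CompleteNormedModule) (fun s => - (s + 1) * exp (- s)));
      intros s Hs.
    - auto_derive; auto; ring.
    - apply (@ex_derive_continuous R_AbsRing R_NormedModule); auto_derive; auto. }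
  assert (Hle := is_RInt_le _ _ 1 b _ _ Hb
                   (RInt_correct _ _ _ (ex_RInt_gamma_integrand x 1 b Rlt_0_1 Hb)) Hprim).
  unfold minus, plus, opp in Hle; simpl in Hle.
  assert (0 < exp (- b)) by apply exp_pos.
  assert (exp (- 1) < 1) by (rewrite <- exp_0; apply exp_increasing; lra).
  enough (RInt (gamma_integrand x) 1 b <= - (b + 1) * exp (- b) + - (- (1 + 1) * exp (- 1)))
    by nra.
  apply Hle; intros s Hs; unfold gamma_integrand.
  assert (Rpower s (x - 1) <= s)
    by (rewrite <- (Rpower_1 s) at 2 by lra; apply Rle_Rpower; lra).
  assert (0 < exp (- s)) by apply exp_pos.
  nra.
Qed.

Lemma RInt_gamma_integrand_le x a b :
  0 < x <= 2 -> 0 < a -> a <= b -> RInt (gamma_integrand x) a b <= / x + 2.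
Proof.
  intros Hx Ha Hab.
  set (a' := Rmin a 1); set (b' := Rmax b 1).
  assert (a' <= a /\ a' <= 1 /\ 0 < a') as (Ha'a & Ha'1 & Ha'0)
    by (unfold a'; repeat split; [apply Rmin_l | apply Rmin_r | apply Rmin_glb_lt; lra]).
  assert (b <= b' /\ 1 <= b') as (Hbb' & Hb'1)
    by (unfold b'; split; [apply Rmax_l | apply Rmax_r]).
  apply Rle_trans with (RInt (gamma_integrand x) a' b').
  { apply RInt_le_RInt_superinterval; try lra.
    - apply ex_RInt_gamma_integrand; lra.
    - intros; apply Rlt_le, gamma_integrand_pos. }
  rewrite <- (RInt_Chasles _ a' 1 b') by (apply ex_RInt_gamma_integrand; lra).
  unfold plus; simpl.
  assert (RInt (gamma_integrand x) a' 1 <= / x) by (apply RInt_gamma_integrand_le_0_1; lra).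
  assert (RInt (gamma_integrand x) 1 b' <= 2) by (apply RInt_gamma_integrand_le_1_oo; lra).
  lra.
Qed.

Lemma Gamma_pos x : 0 < x <= 2 -> 0 < Gamma x.
Proof.
  intros Hx.
  destruct (is_RInt_gen_nonneg_bounded (gamma_integrand x) (/ x + 2)) as (l & Hle_l & Hl).
  - intros; apply Rlt_le, gamma_integrand_pos.
  - apply ex_RInt_gamma_integrand.
  - intros; now apply RInt_gamma_integrand_le.
  - assert (H12 : 0 < RInt (gamma_integrand x) 1 2).
    { apply RInt_gt_0; [lra | intros; apply gamma_integrand_pos |].
      intros; apply continuous_gamma_integrand; lra. }
    assert (RInt (gamma_integrand x) 1 2 <= l) by (apply Hle_l; lra).
    unfold Gamma; fold (gamma_integrand x).
    rewrite (is_RInt_gen_unique (V := R_CompleteNormedModule) _ l Hl); lra.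
Qed.

Lemma is_lim_scal_l_0 (f : R -> R) (x : Rbar) (c : R) :
  is_lim f x 0 -> is_lim (fun t => c * f t) x 0.
Proof.
  intros Hf; replace (Finite 0) with (Rbar_mult c 0) by (simpl; f_equal; ring).
  now apply is_lim_scal_l.
Qed.

Lemma is_lim_sum_n_m_0 (g : nat -> R -> R) (x : Rbar) (n0 n : nat) :
  (forall k, is_lim (g k) x 0) ->
  is_lim (fun t => sum_n_m (fun k => g k t) n0 n) x 0.
Proof.
  intros Hg; induction n as [|n IH].
  - destruct n0 as [|n0].
    + apply (is_lim_ext (g O)); [intros; now rewrite sum_n_n | apply Hg].
    + apply (is_lim_ext (fun _ => 0)); [| apply is_lim_const].
      intros; rewrite sum_n_m_zero; auto; lia.
  - destruct (Nat.le_gt_cases n0 (S n)) as [Hle | Hlt].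
    + apply (is_lim_ext (fun t => sum_n_m (fun k => g k t) n0 n + g (S n) t)).
      { intros t; now rewrite sum_n_Sm. }
      replace 0 with (0 + 0) by ring; now apply is_lim_plus'.
    + apply (is_lim_ext (fun _ => 0)); [intros; rewrite sum_n_m_zero; auto | apply is_lim_const].
Qed.

Lemma is_lim_Rpower_opp (q : R) : 0 < q -> is_lim (fun t => Rpower t (- q)) p_infty 0.
Proof.
  intros Hq.
  assert (Hexponent : is_lim (fun t => - q * ln t) p_infty m_infty).
  { replace m_infty with (Rbar_mult (- q) p_infty)
      by (apply is_Rbar_mult_unique, is_Rbar_mult_sym, is_Rbar_mult_p_infty_neg; simpl; lra).
    apply is_lim_scal_l, is_lim_ln_p. }
  apply (is_lim_comp exp (fun t => - q * ln t) p_infty 0 m_infty is_lim_exp_m Hexponent).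
  exists 0; intros; discriminate.
Qed.

Lemma ln_le_Rpower_div (t q : R) : 0 < q -> ln t <= Rpower t q / q.
Proof.
  intros Hq; apply (Rmult_le_reg_l q); [lra |].
  replace (q * (Rpower t q / q)) with (Rpower t q) by (field; lra).
  pose proof (exp_ineq1_le (q * ln t)); unfold Rpower; lra.
Qed.

Lemma ln_div_rpow_bound (lb A p t : R) :
  0 <= lb -> 0 < A -> 0 < p -> 1 <= t ->
  0 <= ln (1 + t) / (lb + A * rpow t p) <=
  ln 2 / A * Rpower t (- p) + 2 / (p * A) * Rpower t (- (p / 2)).
Proof.
  intros Hlb HA Hp Ht.
  unfold rpow; destruct (Rle_dec t 0) as [Ht0 | _]; [lra |].
  set (Q := Rpower t (p / 2)).
  assert (HQ : 0 < Q) by apply exp_pos.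
  assert (HP : Rpower t p = Q * Q) by (unfold Q; rewrite <- Rpower_plus; f_equal; field).
  assert (Hinv : Rpower t (- p) = / (Q * Q) /\ Rpower t (- (p / 2)) = / Q)
    by (rewrite !Rpower_Ropp, HP; split; reflexivity).
  rewrite HP, (proj1 Hinv), (proj2 Hinv).
  set (N := ln (1 + t)).
  assert (HN0 : 0 < N) by (unfold N; rewrite <- ln_1; apply ln_increasing; lra).
  assert (HN : N <= ln 2 + 2 / p * Q).
  { unfold N; replace (2 / p * Q) with (Q / (p / 2)) by (field; lra).
    assert (ln (1 + t) <= ln 2 + ln t) by (rewrite <- ln_mult by lra; apply ln_le; lra).
    pose proof (ln_le_Rpower_div t (p / 2) ltac:(lra)) as Hln; fold Q in Hln; lra. }
  assert (HD : A * (Q * Q) <= lb + A * (Q * Q)) by lra.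
  assert (HAQ : 0 < A * (Q * Q)) by (apply Rmult_lt_0_compat; nra).
  split; [apply Rdiv_le_0_compat; lra |].
  apply Rle_trans with (N / (A * (Q * Q))).
  - apply Rmult_le_compat_l; [lra |]; now apply Rinv_le_contravar.
  - replace (ln 2 / A * / (Q * Q) + 2 / (p * A) * / Q)
      with ((ln 2 + 2 / p * Q) / (A * (Q * Q))) by (field; lra).
    apply Rmult_le_compat_r; [apply Rlt_le, Rinv_0_lt_compat |]; lra.
Qed.

Lemma is_lim_ln_div_rpow (lb A p : R) :
  0 <= lb -> 0 < A -> 0 < p ->
  is_lim (fun t => ln (1 + t) / (lb + A * rpow t p)) p_infty 0.
Proof.
  intros Hlb HA Hp.
  apply (is_lim_le_le_loc (fun _ => 0)
           (fun t => ln 2 / A * Rpower t (- p) + 2 / (p * A) * Rpower t (- (p / 2)))).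
  - exists 1; intros t Ht; apply ln_div_rpow_bound; lra.
  - apply is_lim_const.
  - replace 0 with (0 + 0) by ring.
    apply is_lim_plus'; apply is_lim_scal_l_0, is_lim_Rpower_opp; lra.
Qed.

(* No sign condition on [sigma2], [m], [theta] is needed: [Rpower x y = exp (y * ln x)]
   is positive for every [x]. *)
Lemma H_k_pos (eta sigma2 m theta : R) (k : nat) :
  2 < eta -> 0 < H_k eta sigma2 m theta k.
Proof.
  intros Heta; unfold H_k.
  assert (0 < 2 / eta < 1) by (split; [apply Rdiv_lt_0_compat | apply Rlt_div_l]; lra).
  assert (0 < Gamma (1 - 2 / eta)) by (apply Gamma_pos; lra).
  assert (0 < Gamma (1 / 2 + 2 / eta)) by (apply Gamma_pos; lra).
  assert (0 < sqrt PI) by apply sqrt_lt_R0, PI_RGT_0.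
  repeat apply Rmult_lt_0_compat; try apply exp_pos; try apply Rinv_0_lt_compat; assumption.
Qed.

Lemma mul_one_sub_sum_sub (L lb : R) (u : nat -> R) (n0 n : nat) :
  L * (1 - lb * sum_n_m u n0 n) - L = - lb * sum_n_m (fun k => L * u k) n0 n.
Proof.
  transitivity (- lb * (L * sum_n_m u n0 n)); [ring |].
  f_equal; symmetry; apply (sum_n_m_mult_l (K := R_Ring)).
Qed.

Theorem lemma4 (eta lb lu sigma2 m theta : R)
  (Heta : 2 < eta) (Hlb : 0 < lb) (Hlu : 0 < lu) (Hs : 0 < sigma2)
  (Hm : 0 < m) (Htheta : 0 < theta) :
  is_lim (fun tau => ln (1 + tau) * F_gamma lb lu eta sigma2 m theta tau
                     - ln (1 + tau)) p_infty 0.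
Proof.
  set (m0 := Z.to_nat (ceil m)).
  set (c := fun k => (-1) ^ (k + 1) * Binomial.C m0 k).
  set (G := G_k lb lu eta sigma2 m theta).
  apply (is_lim_ext (fun t => - lb * sum_n_m (fun k => ln (1 + t) * (c k * / G k t)) 1 m0)).
  { intros t; unfold F_gamma; symmetry; apply mul_one_sub_sum_sub. }
  apply is_lim_scal_l_0, is_lim_sum_n_m_0; intros k.
  apply (is_lim_ext (fun t => c k * (ln (1 + t) / (lb + lu * H_k eta sigma2 m theta k
                                                         * rpow t (2 / eta))))).
  { intros t; unfold G, G_k, Rdiv; ring. }
  apply is_lim_scal_l_0, is_lim_ln_div_rpow.
  - lra.
  - apply Rmult_lt_0_compat; [lra | now apply H_k_pos].
  - apply Rdiv_lt_0_compat; lra.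
Qed.
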